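(* Let $Y:(\mathbb S^{d-1})^k\to\mathbb R$ be a $k$-positive definite kernel and let $\mu\in\mathcal P(\mathbb S^{d-1})$ satisfy $I_Y(\mu)=0$. Then $\mu$ minimizes $I_Y$ over $\mathcal P(\mathbb S^{d-1})$.
   Context: $\mathbb S^{d-1}$ is the unit sphere in $\mathbb R^d$, $\mathcal P(\mathbb S^{d-1})$ its Borel probability measures, $I_Y(\mu)=\int\cdots\int Y(x_1,\ldots,x_k)\,d\mu(x_1)\cdots d\mu(x_k)$. A continuous kernel $Y$ symmetric in its first two variables is $k$-positive definite if for all fixed $z_3,\ldots,z_k\in\mathbb S^{d-1}$ and every finite signed Borel measure $\nu$ on $\mathbb S^{d-1}$, $\int\int Y(x,y,z_3,\ldots,z_k)\,d\nu(x)d\nu(y)\ge0$. *)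

From HB Require Import structures.
From mathcomp Require Import all_boot all_order all_algebra.
From mathcomp Require Import all_classical all_reals all_analysis.
Set Implicit Arguments. Unset Strict Implicit. Unset Printing Implicit Defensive.
Import Order.TTheory GRing.Theory Num.Theory.
Import numFieldNormedType.Exports.
Local Open Scope classical_set_scope.
Local Open Scope ring_scope.

(* R^d is given its Borel
   sigma-algebra: the sigma-algebra generated by the open sets (the matrix
   topology of MathComp-Analysis is the product topology, i.e. the Euclidean
   one). *)
Notation Rd R d := (g_sigma_algebraType (@open (matrix R 1 d))) (only parsing).

Definition sphere (R : realType) (d : nat) : set 'rV[R]_d :=
  [set x | \sum_(j < d) x 0 j ^+ 2 = 1].
Arguments sphere {R} d.

(* A configuration (x_1, ..., x_k) of k points of R^d is encoded as the
   k x d matrix whose i-th row is x_(i+1).  sphere_config is (S^{d-1})^k. *)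
Definition sphere_config (R : realType) (d k : nat) : set 'M[R]_(k, d) :=
  [set M | forall i : 'I_k, sphere d (row i M)].
Arguments sphere_config {R} d k.

(* Iterated integral of F over S^{d-1} w.r.t. mu in the n variables
   s 0, ..., s (n-1) (the remaining ones are irrelevant). *)
Fixpoint iter_int (R : realType) (d : nat)
    (mu : {measure set (Rd R d) -> \bar R}) (n : nat)
    (F : (nat -> 'rV[R]_d) -> R) : R :=
  match n with
  | 0 => F (fun _ => 0)
  | n'.+1 => Rintegral mu (sphere d : set (Rd R d))
      (fun x : Rd R d => iter_int mu n' (fun s => F (fun i => if i == n' then x else s i)))
  end.

Definition I_Y (R : realType) (d k : nat) (Y : 'M[R]_(k, d) -> R)
    (mu : {measure set (Rd R d) -> \bar R}) : R :=
  iter_int mu k (fun s => Y (\matrix_(i < k, j < d) s (i : nat) 0 j)).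

Definition with_first_two (R : realType) (d n : nat) (x y : 'rV[R]_d)
    (Z : 'M[R]_(n.+2, d)) : 'M[R]_(n.+2, d) :=
  \matrix_(i < n.+2, j < d)
    (if (i : nat) == 0%N then x 0 j else if (i : nat) == 1%N then y 0 j else Z i j).

Definition biint (R : realType) (d n : nat) (Y : 'M[R]_(n.+2, d) -> R)
    (Z : 'M[R]_(n.+2, d)) (alpha beta : {measure set (Rd R d) -> \bar R}) : R :=
  Rintegral alpha (sphere d : set (Rd R d)) (fun x : Rd R d =>
    Rintegral beta (sphere d : set (Rd R d)) (fun y : Rd R d =>
      Y (with_first_two x y Z))).

(* A finite signed Borel measure nu on S^{d-1} is
   written as nu = alpha - beta (Jordan decomposition) with alpha, beta finite
   Borel measures, and \int\int Y d nu d nu is expanded bilinearly. *)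
Definition k_positive_definite (R : realType) (d n : nat)
    (Y : 'M[R]_(n.+2, d) -> R) : Prop :=
  {within sphere_config d n.+2, continuous Y} /\
  (forall M, sphere_config d n.+2 M -> Y (xrow 0 1 M) = Y M) /\
  (forall Z : 'M[R]_(n.+2, d), sphere_config d n.+2 Z ->
   forall alpha beta : {finite_measure set (Rd R d) -> \bar R},
     0 <= biint Y Z alpha alpha - biint Y Z alpha beta
          - biint Y Z beta alpha + biint Y Z beta beta).

From HB Require Import structures.
From mathcomp Require Import all_boot all_order all_algebra.
From mathcomp Require Import all_classical all_reals all_analysis.
From mathcomp Require Import perm.
Import Order.TTheory GRing.Theory Num.Theory.
Import numFieldNormedType.Exports.
Local Open Scope classical_set_scope.
Local Open Scope ring_scope.

(* Since I_Y(mu) = 0, it suffices to show I_Y(nu) >= 0.  Freeze the variables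
   x_3, ..., x_k on the sphere: the two remaining integrals form
   \int\int Y(x, y, x_3, ..., x_k) dnu dnu, which is nonnegative by
   k-positive definiteness applied to the signed measure nu - 0.  Integrating
   this nonnegative function in x_3, ..., x_k keeps it nonnegative. *)

Section iterated_integral.
Variables (R : realType) (d : nat) (nu : {measure set (Rd R d) -> \bar R}).

Lemma eq_iter_int (p : nat) (F G : (nat -> 'rV[R]_d) -> R) :
  (forall s, (forall i, (p <= i)%N -> s i = 0) -> F s = G s) ->
  iter_int nu p F = iter_int nu p G.
Proof.
elim: p F G => [|p IH] F G FG /=; first exact: FG.
apply: eq_Rintegral => x _; apply: IH => s s0; apply: FG => i ip.
by rewrite gtn_eqF // s0 // ltnW.
Qed.

Lemma iter_int_ge0_of_inner (p m : nat) (G : (nat -> 'rV[R]_d) -> R) :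
  (forall s, (forall i, (p <= i < p + m)%N -> sphere d (s i)) ->
     0 <= iter_int nu p
            (fun t => G (fun i => if (i < p)%N then t i else s i))) ->
  0 <= iter_int nu (p + m) G.
Proof.
elim: m G => [|m IH] G inner_ge0.
  have := inner_ge0 (fun _ => 0)
    ltac:(by move=> i /andP[pi]; rewrite addn0 ltnNge pi).
  rewrite addn0 (@eq_iter_int _ _ G) // => s s0.
  by congr G; apply: funext => i; case: ltnP => // /s0.
rewrite addnS /=; apply: Rintegral_ge0 => x Sx; apply: IH => s Ss.
have Ss' i : (p <= i < p + m.+1)%N -> sphere d (if i == p + m then x else s i).
  move=> /andP[pi]; rewrite addnS ltnS leq_eqVlt; case: eqP => //= _ im.
  by apply: Ss; rewrite pi im.
move: (inner_ge0 _ Ss'); congr (0 <= iter_int _ _ _); apply: funext => t.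
congr G; apply: funext => i.
by case: ltnP => // ip; rewrite ltn_eqF // ltn_addr.
Qed.

End iterated_integral.

Section first_two_variables.
Variables (R : realType) (d n : nat).
Implicit Types (x y : 'rV[R]_d) (Z : 'M[R]_(n.+2, d)).

Lemma xrow_with_first_two x y Z :
  xrow 0 1 (with_first_two x y Z) = with_first_two y x Z.
Proof.
apply/matrixP => -[[|[|i]] lti] j; rewrite !mxE.
- by rewrite (_ : Ordinal lti = 0) ?tpermL //; apply: val_inj.
- by rewrite (_ : Ordinal lti = 1) ?tpermR //; apply: val_inj.
- by rewrite tpermD //; apply/eqP => /(congr1 val).
Qed.

Lemma with_first_two_overwrite x y x' y' Z :
  with_first_two x y (with_first_two x' y' Z) = with_first_two x y Z.
Proof. by apply/matrixP => -[[|[|i]] lti] j; rewrite !mxE. Qed.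

Lemma sphere_config_with_first_two x y Z :
  sphere d x -> sphere d y ->
  (forall i : 'I_n.+2, (2 <= i)%N -> sphere d (row i Z)) ->
  sphere_config d n.+2 (with_first_two x y Z).
Proof.
move=> Sx Sy SZ [[|[|i]] lti]; rewrite /sphere /=.
- by rewrite -Sx; apply: eq_bigr => j _; rewrite !mxE.
- by rewrite -Sy; apply: eq_bigr => j _; rewrite !mxE.
- by rewrite -(SZ (Ordinal lti)) //; apply: eq_bigr => j _; rewrite !mxE.
Qed.

End first_two_variables.

Section double_integral.
Variables (R : realType) (d n : nat) (Y : 'M[R]_(n.+2, d) -> R).
Implicit Types (Z : 'M[R]_(n.+2, d))
  (alpha beta : {measure set (Rd R d) -> \bar R}).

Lemma biint_mzerol Z beta : biint Y Z mzero beta = 0.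
Proof. by rewrite /biint /Rintegral integral_measure_zero. Qed.

Lemma biint_mzeror Z alpha : biint Y Z alpha mzero = 0.
Proof.
rewrite /biint /Rintegral integral0_eq ?fine0 // => x _.
by rewrite integral_measure_zero.
Qed.

(* Positive definiteness is only assumed at configurations lying entirely on
   the sphere, so rows 0 and 1 of [Z] are first overwritten by a point of the
   sphere; there is none only when d = 0. *)
Lemma biint_ge0 Z (alpha : {finite_measure set (Rd R d) -> \bar R}) :
  k_positive_definite Y ->
  (forall i : 'I_n.+2, (2 <= i)%N -> sphere d (row i Z)) ->
  0 <= biint Y Z alpha alpha.
Proof.
move=> [_ [_ Ypd]] SZ.
have [[p Sp]|noS] := pselect (exists p : 'rV[R]_d, sphere d p); last first.
  rewrite /biint; suff -> : (sphere d : set (Rd R d)) = set0.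
    by rewrite Rintegral_set0.
  by apply/seteqP; split => // x Sx; apply: noS; exists x.
have SZ' : sphere_config d n.+2 (with_first_two p p Z).
  exact: sphere_config_with_first_two.
have := Ypd _ SZ' alpha mzero.
rewrite biint_mzerol !biint_mzeror !subr0 addr0 /biint.
by under [X in _ <= X -> _]eq_Rintegral do
  under eq_Rintegral do rewrite with_first_two_overwrite.
Qed.

(* [iter_int] integrates its first variable innermost, whereas [biint]
   integrates the first row outermost: the symmetry of [Y] reconciles the two
   orders. *)
Lemma iter_int2_biint alpha (s : nat -> 'rV[R]_d) :
  (forall M, sphere_config d n.+2 M -> Y (xrow 0 1 M) = Y M) ->
  (forall i, (2 <= i < n.+2)%N -> sphere d (s i)) ->
  iter_int alpha 2
    (fun t => Y (\matrix_(i < n.+2) (if (i < 2)%N then t i else s i)))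
  = biint Y (\matrix_(i < n.+2) s i) alpha alpha.
Proof.
move=> Ysym Ss; apply: eq_Rintegral => x /[1!inE] Sx.
apply: eq_Rintegral => y /[1!inE] Sy.
rewrite -[RHS]Ysym ?xrow_with_first_two; last first.
  apply: sphere_config_with_first_two => // i i2.
  by rewrite rowK; apply: Ss; rewrite i2 ltn_ord.
by congr Y; apply/matrixP => -[[|[|i]] lti] j; rewrite !mxE.
Qed.

End double_integral.

Theorem proposition2p6 (R : realType) (d n : nat) (Y : 'M[R]_(n.+2, d) -> R)
    (mu : probability (Rd R d) R) :
  k_positive_definite Y ->
  mu (~` (sphere d : set (Rd R d))) = 0%E ->
  I_Y Y mu = 0 ->
  forall nu : probability (Rd R d) R,
    nu (~` (sphere d : set (Rd R d))) = 0%E ->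
    I_Y Y mu <= I_Y Y nu.
Proof.
move=> Ypd _ -> nu _; have [_ [Ysym _]] := Ypd.
apply: (@iter_int_ge0_of_inner _ _ _ 2 n) => s Ss.
rewrite (@iter_int2_biint _ _ _ Y nu s) //.
by apply: biint_ge0 => // i i2; rewrite rowK; apply: Ss; rewrite i2 ltn_ord.
Qed.
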